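(* Let $I\subseteq R$ be a good ideal. For each $i\in\{1,\dots,n\}$ let $e_i$ be the $i$-th standard unit vector of $\mathbb N^n$ and let $q_i$ be the smallest nonnegative integer such that $I_{te_i}=I_{q_ie_i}$ for all integers $t\ge q_i$ (such $q_i$ exists). Then the Ratliff--Rush closure of $I$ is $$\tilde I=I_{q_1,0,\dots,0}\cap I_{0,q_2,0,\dots,0}\cap\cdots\cap I_{0,\dots,0,q_n}.$$
   Context: Let $\mathbb K$ be a field, $R=\mathbb K[x_1,\dots,x_n]$, $\mathfrak m=\langle x_1,\dots,x_n\rangle$, $\mathbb N=\{0,1,2,\dots\}$. A monomial $x_1^{\alpha_1}\cdots x_n^{\alpha_n}$ is identified with the point $(\alpha_1,\dots,\alpha_n)\in\mathbb N^n$. For a monomial ideal $I$, $G(I)$ denotes its (unique) minimal monomial generating set. If $I$ is an $\mathfrak m$-primary monomial ideal, then for each $i$ there is a unique $d_i\ge1$ with $x_i^{d_i}\in G(I)$; write $\mu_i=x_i^{d_i}$. For $(a_1,\dots,a_n)\in\mathbb N^n$ the box associated to $I$ is $B_{a_1,\dots,a_n}=([a_1d_1,(a_1+1)d_1]\times\cdots\times[a_nd_n,(a_n+1)d_n])\cap\mathbb N^n$; a monomial belongs to a box if its exponent vector does. An $\mathfrak m$-primary monomial ideal $I$ is called good if for every integer $l\ge1$, every element of $G(I^l)$ belongs to some box $B_{a_1,\dots,a_n}$ with $a_1+\dots+a_n=l-1$. For a good ideal $I$ and $a=(a_1,\dots,a_n)\in\mathbb N^n$, with $l=a_1+\dots+a_n+1$,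 define $I_{a}=I_{a_1,\dots,a_n}=\left\langle \frac{m}{\mu_1^{a_1}\cdots\mu_n^{a_n}} : m\in B_{a_1,\dots,a_n}\cap G(I^l)\right\rangle$. The Ratliff--Rush closure of a regular ideal $I$ is $\tilde I=\bigcup_{k\ge0}(I^{k+1}:I^k)$. *)

(* Monomial ideals of K[x_1..x_n] are represented by their
   sets of exponent vectors (upward-closed subsets of N^n). *)
From mathcomp Require Import all_boot.
Set Implicit Arguments. Unset Strict Implicit. Unset Printing Implicit Defensive.

Definition mon (n : nat) := {ffun 'I_n -> nat}.

Definition mdiv n (a b : mon n) : Prop := forall i, a i <= b i.
Definition mmul n (a b : mon n) : mon n := [ffun i => a i + b i].
Definition mpure n (i : 'I_n) (k : nat) : mon n := [ffun j => if j == i then k else 0].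
Definition mone n : mon n := [ffun _ => 0].

Definition mset n := mon n -> Prop.

Definition is_mideal n (S : mset n) : Prop :=
  forall a b, S a -> mdiv a b -> S b.

Definition mgen n (G : mset n) : mset n := fun c => exists2 a, G a & mdiv a c.

Definition mingens n (S : mset n) : mset n :=
  fun a => S a /\ forall b, S b -> mdiv b a -> b = a.

Definition mtop n : mset n := fun _ => True.
Definition mprod n (S T : mset n) : mset n :=
  fun c => exists a b, [/\ S a, T b & mdiv (mmul a b) c].
Fixpoint mpow n (S : mset n) (l : nat) : mset n :=
  if l is l'.+1 then mprod S (mpow S l') else @mtop n.
Definition mcolon n (S T : mset n) : mset n :=
  fun c => forall b, T b -> S (mmul c b).

Definition ratliff_rush n (S : mset n) : mset n :=
  fun c => exists k, mcolon (mpow S k.+1) (mpow S k) c.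

Definition mprimary n (S : mset n) : Prop :=
  ~ S (mone n) /\ forall i, exists k, S (mpure i k).

Definition pure_gens n (S : mset n) (d : 'I_n -> nat) : Prop :=
  forall i, 0 < d i /\ mingens S (mpure i (d i)).

Definition inbox n (d : 'I_n -> nat) (a m : mon n) : Prop :=
  forall i, a i * d i <= m i <= (a i).+1 * d i.

Definition msum n (a : mon n) : nat := \sum_(i < n) a i.

Definition good n (S : mset n) (d : 'I_n -> nat) : Prop :=
  forall l, 0 < l -> forall m, mingens (mpow S l) m ->
    exists a : mon n, msum a = l.-1 /\ inbox d a m.

(* I_a : generated by m / mu^a for m in B_a ∩ G(I^l), l = |a| + 1 *)
Definition Ia n (S : mset n) (d : 'I_n -> nat) (a : mon n) : mset n :=
  mgen (fun c => exists2 m, mingens (mpow S (msum a).+1) m /\ inbox d a m &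
                   c = [ffun i => m i - a i * d i]).

Definition mseteq n (S T : mset n) : Prop := forall c, S c <-> T c.

Definition stable_from n (S : mset n) (d : 'I_n -> nat) (i : 'I_n) (q : nat) : Prop :=
  forall t, q <= t -> mseteq (Ia S d (mpure i t)) (Ia S d (mpure i q)).

From Stdlib Require Import Classical ClassicalEpsilon.
From mathcomp Require Import all_boot zify.
Set Implicit Arguments. Unset Strict Implicit. Unset Printing Implicit Defensive.

(* Write mu_i = x_i^(d_i). For a good ideal, I_(t e_i) is the colon ideal
   I^(t+1) : mu_i^t: if c_j >= d_j for some j <> i then c is a multiple of mu_j,
   which lies in I_(t e_i); otherwise a minimal generator of I^(t+1) dividing
   c mu_i^t cannot leave the box B_(t e_i). These colon ideals form an ascending
   chain of ideals containing I, and only finitely many monomials lie outside I,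
   so the chain is stationary from some q_i on.
   If c I^k is in I^(k+1), then c mu_i^k is in I^(k+1), so c is in I_(q_i e_i).
   Conversely, goodness forces sum_k v_k / d_k >= 1 for every monomial v of I,
   so (mu_1, ..., mu_n) is a reduction of I: a product of p bounded generators of
   I, p large, contains a power v^N that is a product of at least N of the mu's.
   If c mu_i^t is in I^(t+1) for all i, then c mu^a is in I^(|a|+1) as soon as
   some a_i >= t, hence c v^N is in I^(N+1) and c I^p is in I^(p+1). *)

Definition asbool (P : Prop) : bool :=
  if excluded_middle_informative P then true else false.

Lemma asboolP (P : Prop) : reflect P (asbool P).
Proof. by rewrite /asbool; case: excluded_middle_informative => h; constructor. Qed.

Lemma ex_argmin_nat (f : nat -> nat) : exists q, forall t, f q <= f t.
Proof.
have hex : exists v, asbool (exists t, f t = v) by exists (f 0); apply/asboolP; exists 0.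
have [v /asboolP [q <-] hmin] := ex_minnP hex.
by exists q => t; apply: hmin; apply/asboolP; exists t.
Qed.

Lemma pigeonhole_count (T : eqType) (U s : seq T) N :
  {subset s <= U} -> (forall v, count_mem v s <= N) -> size s <= size U * N.
Proof.
elim: U s => [|u U IH] s sU hN.
  by case: s sU hN => // x s /(_ x); rewrite mem_head => /(_ isT).
rewrite -(count_predC (pred1 u) s) /= mulSn leq_add ?hN // -size_filter.
apply: IH => [x|v].
  rewrite mem_filter => /andP[xu /sU]; rewrite inE => /orP[/eqP ux|//].
  by move: xu; rewrite /= ux eqxx.
by rewrite count_filter; apply: leq_trans (hN v); apply: sub_count => x /andP[].
Qed.

Section Monomials.
Variable n : nat.
Implicit Types (a b c x : mon n) (S : mset n).

Lemma mdiv_refl a : mdiv a a. Proof. by []. Qed.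

Lemma mdiv_trans a b c : mdiv a b -> mdiv b c -> mdiv a c.
Proof. by move=> ab bc i; apply: leq_trans (ab i) (bc i). Qed.

Lemma mmulA a b c : mmul a (mmul b c) = mmul (mmul a b) c.
Proof. by apply/ffunP=> i; rewrite !ffunE addnA. Qed.

Lemma mdiv_mmul a b a' b' : mdiv a a' -> mdiv b b' -> mdiv (mmul a b) (mmul a' b').
Proof. by move=> aa' bb' i; rewrite !ffunE leq_add. Qed.

Lemma mdiv_mmulr a b : mdiv b (mmul a b).
Proof. by move=> i; rewrite ffunE leq_addl. Qed.

Lemma mgen_up (G : mset n) c c' : mgen G c -> mdiv c c' -> mgen G c'.
Proof. by move=> [g Gg gc] cc'; exists g => //; apply: mdiv_trans cc'. Qed.

Definition mscale (N : nat) x : mon n := [ffun k => N * x k].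

Definition mprod_seq (s : seq (mon n)) : mon n := foldr (@mmul n) (mone n) s.

Definition box (B : nat) : seq (mon n) :=
  [seq [ffun k => val (x k)] | x : {ffun 'I_n -> 'I_B}].

Lemma mem_box B c : (forall k, c k < B) -> c \in box B.
Proof.
move=> cB; apply/mapP; exists [ffun k => Ordinal (cB k)]; first by rewrite mem_enum.
by apply/ffunP=> k; rewrite !ffunE.
Qed.

Section WeightedDegree.
Variable w : 'I_n -> nat.

Definition wdeg x := \sum_k x k * w k.

Lemma wdeg_mmul a b : wdeg (mmul a b) = wdeg a + wdeg b.
Proof. by rewrite /wdeg -big_split; apply: eq_bigr => k _; rewrite ffunE mulnDl. Qed.

Lemma wdeg_mscale N x : wdeg (mscale N x) = N * wdeg x.
Proof. by rewrite /wdeg big_distrr; apply: eq_bigr => k _; rewrite ffunE -mulnA. Qed.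

Lemma wdeg_mpure i e : wdeg (mpure i e) = e * w i.
Proof.
rewrite /wdeg (bigD1 i) //= big1 ?addn0 ?ffunE ?eqxx // => j ji.
by rewrite ffunE (negbTE ji).
Qed.

Lemma leq_wdeg a b : mdiv a b -> wdeg a <= wdeg b.
Proof. by move=> ab; apply: leq_sum => k _; rewrite leq_mul2r ab orbT. Qed.

Hypothesis w_gt0 : forall k, 0 < w k.

Lemma mdiv_wdeg_eq a b : mdiv a b -> wdeg b <= wdeg a -> a = b.
Proof.
move=> ab ba; apply/ffunP=> k; apply/eqP; rewrite eqn_leq ab /=.
apply: contraTT ba; rewrite -!ltnNge => lt_ak.
rewrite /wdeg (bigD1 k) //= [X in _ < X](bigD1 k) //= -addSn.
by rewrite leq_add ?ltn_pmul2r ?w_gt0 // leq_sum // => j _; rewrite leq_mul2r ab orbT.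
Qed.

End WeightedDegree.

Lemma msum_wdeg x : msum x = wdeg (fun=> 1) x.
Proof. by apply: eq_bigr => k _; rewrite muln1. Qed.

Lemma msum_mpure (i : 'I_n) e : msum (mpure i e) = e.
Proof. by rewrite msum_wdeg wdeg_mpure muln1. Qed.

Lemma mpure_msum (i : 'I_n) a : (forall k, k != i -> a k = 0) -> a = mpure i (msum a).
Proof.
move=> a0; apply/ffunP=> k; rewrite ffunE; case: (eqVneq k i) => [->|ki]; last exact: a0.
by rewrite /msum (bigD1 i) //= big1 ?addn0 // => j /a0.
Qed.

Lemma exists_geq_msum a t : n * t.-1 < msum a -> exists i, t <= a i.
Proof.
case: (pickP (fun k => t <= a k)) => [k ak _|small]; first by exists k.
have : msum a <= \sum_(k < n) t.-1.
  by apply: leq_sum => k _; move: (small k) => /negbT; rewrite -ltnNge; case: t {small}.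
by rewrite sum_nat_const card_ord ltnNge => ->.
Qed.

Lemma mingens_below S x : S x -> exists2 m, mingens S m & mdiv m x.
Proof.
move=> Sx.
have hex : exists v, asbool (exists2 b, S b /\ mdiv b x & msum b = v).
  by exists (msum x); apply/asboolP; exists x => //; split.
have [v /asboolP [m [Sm mx] <-] hmin] := ex_minnP hex.
exists m => //; split=> // b Sb bm.
apply: (@mdiv_wdeg_eq (fun=> 1)) => //; rewrite -!msum_wdeg.
by apply: hmin; apply/asboolP; exists b => //; split=> //; apply: mdiv_trans mx.
Qed.

Lemma mpow_up S l x y : mpow S l x -> mdiv x y -> mpow S l y.
Proof.
case: l => [//|l] /= [a [b [Sa Slb ab_x]]] xy.
by exists a, b; split=> //; apply: mdiv_trans xy.
Qed.

Lemma mpow_antitone S p q x : p <= q -> mpow S q x -> mpow S p x.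
Proof.
move=> /subnK <-; elim: (q - p) x => [|k IH] x //= [a [b [_ Sb abx]]].
exact/IH/(mpow_up Sb)/(mdiv_trans (mdiv_mmulr a b) abx).
Qed.

Lemma mpow_mmul S p q x y : mpow S p x -> mpow S q y -> mpow S (p + q) (mmul x y).
Proof.
elim: p x => [|p IH] x /=; first by move=> _ Sy; apply: mpow_up Sy (mdiv_mmulr _ _).
move=> [a [b [Sa Sb abx]]] Sy; exists a, (mmul b y); split=> //; first exact: IH.
by rewrite mmulA; apply: mdiv_mmul.
Qed.

Lemma mpow_mscale S N x : S x -> mpow S N (mscale N x).
Proof.
move=> Sx; elim: N => [|N IH] //=; exists x, (mscale N x); split=> // k.
by rewrite !ffunE mulSn.
Qed.

Lemma mpow_mpure S i e t : S (mpure i e) -> mpow S t (mpure i (t * e)).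
Proof.
move=> Se; elim: t => [|t IH] //=; exists (mpure i e), (mpure i (t * e)); split=> // k.
by rewrite !ffunE; case: (k == i).
Qed.

Lemma mpow_mprod_seq S s : (forall h, h \in s -> S h) -> mpow S (size s) (mprod_seq s).
Proof.
elim: s => [|h s IH] //= Ss; exists h, (mprod_seq s); split=> //.
- by apply: Ss; rewrite mem_head.
- by apply: IH => x xs; apply: Ss; rewrite inE xs orbT.
Qed.

Lemma mprod_seq_extract v s N : N <= count_mem v s ->
  exists2 r, size r + N = size s /\ {subset r <= s} &
             mprod_seq s = mmul (mscale N v) (mprod_seq r).
Proof.
elim: s N => [|x s IH] N /=.
  by rewrite leqn0 => /eqP ->; exists [::] => //; apply/ffunP=> k; rewrite !ffunE.
case: (eqVneq x v) => [->|xv] /=.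
  case: N => [|N] hN.
    exists (v :: s); first by split; rewrite ?addn0.
    by apply/ffunP=> k; rewrite !ffunE.
  have [r [size_r rs] ->] := IH N hN.
  exists r; first by split=> [|y yr]; rewrite ?addnS ?size_r // inE rs ?orbT.
  by apply/ffunP=> k; rewrite !ffunE mulSn addnA.
rewrite add0n => /IH [r [size_r rs] ->].
exists (x :: r).
  by split=> [|y]; rewrite /= ?addSn ?size_r // !inE => /orP[->|/rs ->]; rewrite ?orbT.
by apply/ffunP=> k; rewrite !ffunE addnCA.
Qed.

End Monomials.

Lemma chain_le n (J : nat -> mset n) :
  (forall t c, J t c -> J t.+1 c) -> forall t t' c, t <= t' -> J t c -> J t' c.
Proof.
move=> Jsucc t t' c /subnK <-; elim: (t' - t) => [|k IH] //= Jc.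
exact/Jsucc/IH.
Qed.

(* The number of points of the finite box outside J t is nonincreasing in t,
   and J is constant from any t at which it is minimal. *)
Lemma chain_stationary n (J : nat -> mset n) (P : mset n) B :
  (forall t c, J t c -> J t.+1 c) -> (forall t c, P c -> J t c) ->
  (forall c, ~ P c -> forall k, c k < B) ->
  exists q, forall t, q <= t -> mseteq (J t) (J q).
Proof.
move=> Jsucc PJ Pbounded.
pose out t := [set x : {ffun 'I_n -> 'I_B} | ~~ asbool (J t [ffun k => val (x k)])].
have [q qmin] := ex_argmin_nat (fun t => #|out t|).
exists q => t qt c; split; last exact: chain_le.
move=> Jtc; apply: NNPP => Jqc.
have out_sub : out t \subset out q.
  by apply/subsetP => x; rewrite !inE; apply: contra => /asboolP/(chain_le Jsucc qt)/asboolP.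
have card_eq : #|out t| = #|out q| by apply/eqP; rewrite eqn_leq subset_leq_card ?qmin.
have /(subset_cardP card_eq) out_eq := out_sub.
have /mapP[x _ cx] : c \in box n B by apply/mem_box/Pbounded => /(PJ q).
have : x \in out q by rewrite inE -cx; apply/asboolP.
by rewrite -out_eq inE -cx => /asboolP.
Qed.

Section GoodIdeal.
Variables (n : nat) (I : mset n) (d : 'I_n -> nat).
Hypothesis pure_gens_I : pure_gens I d.
Hypothesis good_I : good I d.
Implicit Types (a b c m v x : mon n).

Lemma d_gt0 k : 0 < d k. Proof. by case: (pure_gens_I k). Qed.

Lemma mu_mem k : I (mpure k (d k)). Proof. by case: (pure_gens_I k) => _ []. Qed.

Definition mupow a : mon n := [ffun k => a k * d k].

Lemma mdiv_mupow_inbox a m : inbox d a m -> mdiv (mupow a) m.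
Proof. by move=> am k; rewrite ffunE; case/andP: (am k). Qed.

Definition dprod := \prod_(k < n) d k.

(* wt x = dprod * sum_k x_k / d_k. By wt_mem_geq, I lies in the integral
   closure of (mu_1, ..., mu_n), where mu_k = x_k^(d_k). *)
Definition wt := wdeg (fun k => dprod %/ d k).

Lemma dprod_gt0 : 0 < dprod. Proof. exact/prodn_gt0/d_gt0. Qed.

Lemma divnK_dprod k : dprod %/ d k * d k = dprod.
Proof. by rewrite divnK // /dprod (bigD1 k) //= dvdn_mulr. Qed.

Lemma wt_coef_gt0 k : 0 < dprod %/ d k.
Proof. by rewrite -(ltn_pmul2r (d_gt0 k)) divnK_dprod dprod_gt0. Qed.

Lemma wt_mupow a : wt (mupow a) = dprod * msum a.
Proof.
rewrite /wt /wdeg /msum big_distrr; apply: eq_bigr => k _.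
by rewrite ffunE -mulnA [d k * _]mulnC divnK_dprod mulnC.
Qed.

(* If wt x < dprod, then x^(dprod+1) lies in I^(dprod+1), so by goodness it is
   divisible by some mu^a with |a| = dprod, whence
   dprod^2 = wt mu^a <= (dprod + 1) wt x < dprod^2. *)
Lemma wt_mem_geq x : I x -> dprod <= wt x.
Proof.
move=> Ix; rewrite leqNgt; apply/negP => small.
have [m m_min mx] := mingens_below (mpow_mscale dprod.+1 Ix).
have [a [a_sum a_box]] := good_I (ltn0Sn dprod) m_min.
have := leq_wdeg (fun k => dprod %/ d k) (mdiv_trans (mdiv_mupow_inbox a_box) mx).
rewrite -/wt wt_mupow a_sum /wt wdeg_mscale -/wt.
by have := dprod_gt0; nia.
Qed.

Lemma wt_mpow_geq l x : mpow I l x -> l * dprod <= wt x.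
Proof.
elim: l x => [|l IH] x //= [a [b [Ia Ilb abx]]].
have := leq_wdeg (fun k => dprod %/ d k) abx; rewrite wdeg_mmul -/wt.
by have := wt_mem_geq Ia; have := IH _ Ilb; lia.
Qed.

Lemma mingens_mpow_wt l m : mpow I l m -> wt m <= l * dprod -> mingens (mpow I l) m.
Proof.
move=> Ilm wt_m; split=> // b Ilb bm.
apply: (mdiv_wdeg_eq wt_coef_gt0 bm); apply: leq_trans wt_m _.
exact: wt_mpow_geq.
Qed.

Lemma not_mem_lt_max (I_ideal : is_mideal I) c : ~ I c -> forall k, c k < \max_j d j.
Proof.
move=> Ic k; rewrite ltnNge; apply/negP => dk; apply/Ic/(I_ideal _ _ (mu_mem k)) => j.
by rewrite ffunE; case: (eqVneq j k) => [->|//]; apply: leq_trans dk; apply: leq_bigmax.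
Qed.

Definition pure_colon (i : 'I_n) t : mset n :=
  fun c => mpow I t.+1 (mmul c (mpure i (t * d i))).

Lemma mem_pure_colon i t c : I c -> pure_colon i t c.
Proof. by move=> Ic; exists c, (mpure i (t * d i)); split=> //; apply/mpow_mpure/mu_mem. Qed.

Lemma pure_colon_succ i t c : pure_colon i t c -> pure_colon i t.+1 c.
Proof.
move=> ct; exists (mpure i (d i)), (mmul c (mpure i (t * d i))); split=> //.
  exact: mu_mem.
by move=> k; rewrite !ffunE; case: (k == i); lia.
Qed.

Lemma pure_colon_mono i t t' c : t <= t' -> pure_colon i t c -> pure_colon i t' c.
Proof. exact: (chain_le (@pure_colon_succ i)). Qed.

Lemma Ia_sub_pure_colon i t c : Ia I d (mpure i t) c -> pure_colon i t c.
Proof.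
move=> [g [m [m_min m_box] ->] gc]; rewrite msum_mpure in m_min.
apply: mpow_up (proj1 m_min) _ => k; move: (gc k) (m_box k); rewrite !ffunE.
by case: (eqVneq k i) => [->|_] /=; lia.
Qed.

Lemma mu_mem_Ia i t j : Ia I d (mpure i t) (mpure j (d j)).
Proof.
pose m := mmul (mpure j (d j)) (mpure i (t * d i)).
have m_min : mingens (mpow I t.+1) m.
  apply: mingens_mpow_wt (mem_pure_colon i t (mu_mem j)) _.
  by rewrite /wt wdeg_mmul !wdeg_mpure; have := divnK_dprod i; have := divnK_dprod j; nia.
have m_k k : m k = mpure j (d j) k + mpure i t k * d k.
  by rewrite !ffunE; case: (eqVneq k i) => [->|_]; rewrite ?mul0n.
have mu_j_k k : mpure j (d j) k <= d k.
  by rewrite ffunE; case: (eqVneq k j) => [->|].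
exists (mpure j (d j)); last exact: mdiv_refl.
exists m; last by apply/ffunP=> k; rewrite [RHS]ffunE m_k addnK.
by split; rewrite ?msum_mpure // => k; rewrite m_k; have := mu_j_k k; lia.
Qed.

Lemma pure_colon_sub_Ia i t c : pure_colon i t c -> Ia I d (mpure i t) c.
Proof.
move=> ct.
case: (pickP (fun j => (j != i) && (d j <= c j))) => [j /andP[_ dj] | small].
  apply: mgen_up (mu_mem_Ia i t j) _ => k; rewrite ffunE.
  by case: (eqVneq k j) => [->|].
have c_small k : k != i -> c k < d k.
  by move=> ki; move: (small k); rewrite /= ki /= ltnNge => ->.
have [m m_min mc] := mingens_below (ct : mpow I t.+1 _).
have [b [b_sum b_box]] := good_I (ltn0Sn t) m_min.
have b_pure : b = mpure i t.
  rewrite -[t]b_sum; apply: mpure_msum => k ki.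
  move: (b_box k) (mc k) (c_small k ki) (d_gt0 k); rewrite !ffunE (negbTE ki).
  by case: (b k) => //= b' /andP[+ _]; nia.
exists [ffun k => m k - mpure i t k * d k]; first by exists m; rewrite ?msum_mpure -?b_pure.
by move=> k; move: (mc k); rewrite !ffunE; case: (eqVneq k i) => [->|_] /=; lia.
Qed.

Lemma Ia_pure_colon i t : mseteq (Ia I d (mpure i t)) (pure_colon i t).
Proof. by move=> c; split; [apply: Ia_sub_pure_colon | apply: pure_colon_sub_Ia]. Qed.

Lemma ratliff_rush_pure_colon c : ratliff_rush I c -> exists k, forall i, pure_colon i k c.
Proof. by move=> [k ck]; exists k => i; apply/ck/mpow_mpure/mu_mem. Qed.

Lemma mupow_split a i t : t <= a i ->
  exists2 a', mupow a = mmul (mpure i (t * d i)) (mupow a') & msum a = t + msum a'.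
Proof.
move=> ta; exists [ffun k => if k == i then a k - t else a k].
  apply/ffunP=> k; rewrite !ffunE; case: (eqVneq k i) => [->|] //=.
  by rewrite -mulnDl subnKC.
rewrite /msum (bigD1 i) //= [X in _ = _ + X](bigD1 i) //= ffunE eqxx addnA subnKC //.
by congr (_ + _); apply: eq_bigr => k ki; rewrite ffunE (negbTE ki).
Qed.

Lemma mpow_mupow a : mpow I (msum a) (mupow a).
Proof.
move sum_a: (msum a) => s; elim: s a sum_a => [|s IH] a sum_a //=.
have [i ai] : exists i, 1 <= a i by apply: exists_geq_msum; rewrite sum_a muln0.
have [a' -> sum_a'] := mupow_split ai.
exists (mpure i (d i)), (mupow a'); split; rewrite ?mul1n //; first exact: mu_mem.
by apply: IH; lia.
Qed.

Lemma pure_colon_mupow i t c a : pure_colon i t c -> t <= a i ->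
  mpow I (msum a).+1 (mmul c (mupow a)).
Proof.
move=> ct ta; have [a' -> ->] := mupow_split ta.
by rewrite mmulA -addSn; apply: mpow_mmul ct (mpow_mupow a').
Qed.

(* v^(dprod M) = mu^a with a_k = M (dprod / d_k) v_k, and |a| = M wt v >= M dprod. *)
Lemma pure_colon_mscale t c v : (forall i, pure_colon i t c) -> I v ->
  mpow I (dprod * (n * t).+1).+1 (mmul c (mscale (dprod * (n * t).+1) v)).
Proof.
move=> ct Iv; set M := (n * t).+1.
pose a : mon n := [ffun k => M * (dprod %/ d k) * v k].
have a_mupow : mupow a = mscale (dprod * M) v.
  by apply/ffunP=> k; rewrite !ffunE mulnAC -(mulnA M) divnK_dprod (mulnC M).
have a_sum : msum a = M * wt v.
  by rewrite /msum /wt /wdeg big_distrr; apply: eq_bigr => k _; rewrite ffunE mulnAC -mulnA.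
have [i ta] : exists i, t <= a i.
  by apply: exists_geq_msum; rewrite a_sum; have := wt_mem_geq Iv; have := dprod_gt0; nia.
have := pure_colon_mupow (ct i) ta; rewrite a_mupow a_sum.
by apply: mpow_antitone; rewrite ltnS; have := wt_mem_geq Iv; nia.
Qed.

Lemma mem_bounded_below x : I x -> exists2 h, I h /\ (forall k, h k <= d k) & mdiv h x.
Proof.
move=> Ix; case: (pickP (fun k => d k <= x k)) => [k dk | small].
  exists (mpure k (d k)).
    by split=> [|j]; [apply: mu_mem | rewrite ffunE; case: (eqVneq j k) => [->|]].
  by move=> j; rewrite ffunE; case: (eqVneq j k) => [->|].
by exists x => //; split=> // k; move: (small k) => /negbT; rewrite -ltnNge; apply: ltnW.
Qed.

Lemma mpow_bounded_factors l x : mpow I l x ->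
  exists2 s, size s = l /\ (forall h, h \in s -> I h /\ forall k, h k <= d k) &
             mdiv (mprod_seq s) x.
Proof.
elim: l x => [|l IH] x /=; first by exists [::] => // k; rewrite ffunE.
move=> [a [b [Ia Ilb abx]]].
have [h [Ih h_bounded] ha] := mem_bounded_below Ia.
have [s [size_s s_bounded] sb] := IH b Ilb.
exists (h :: s); last exact: mdiv_trans (mdiv_mmul ha sb) abx.
by split=> [|g]; rewrite /= ?size_s // inE => /orP[/eqP->|/s_bounded].
Qed.

Lemma pure_colon_ratliff_rush t c : (forall i, pure_colon i t c) -> ratliff_rush I c.
Proof.
move=> ct; set N := dprod * (n * t).+1.
have N_gt0 : 0 < N by rewrite muln_gt0 dprod_gt0.
set U := box n (\max_k d k).+1.
exists (size U * N.-1).+1 => p Ip.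
have [s [size_s s_bounded] s_p] := mpow_bounded_factors Ip.
have [v v_many] : exists v, N <= count_mem v s.
  apply: NNPP => few; have : size s <= size U * N.-1.
    apply: pigeonhole_count => [h /s_bounded [_ h_bounded] | v].
      by apply: mem_box => k; rewrite ltnS (leq_trans (h_bounded k)) ?leq_bigmax.
    by rewrite -ltnS prednK // ltnNge; apply/negP => many; apply: few; exists v.
  by rewrite size_s ltnn.
have v_in : v \in s by rewrite -has_pred1 has_count; lia.
have [Iv _] := s_bounded v v_in.
have [r [size_r r_sub] s_eq] := mprod_seq_extract v_many.
apply: mpow_up (mdiv_mmul (mdiv_refl c) s_p).
rewrite s_eq mmulA.
have -> : (size U * N.-1).+2 = N.+1 + size r by lia.
apply: mpow_mmul; first exact: pure_colon_mscale.
by apply: mpow_mprod_seq => h /r_sub /s_bounded [].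
Qed.

End GoodIdeal.

Theorem mainTheorem10 (n : nat) (hn : 0 < n) (I : mset n) (d : 'I_n -> nat) :
  is_mideal I -> mprimary I -> pure_gens I d -> good I d ->
  (forall i : 'I_n, exists q, stable_from I d i q) /\
  (forall q : 'I_n -> nat,
     (forall i, stable_from I d i (q i) /\
                forall q', stable_from I d i q' -> q i <= q') ->
     mseteq (ratliff_rush I)
            (fun c => forall i : 'I_n, Ia I d (mpure i (q i)) c)).
Proof.
move=> I_ideal _ pure_gens_I good_I.
have Ia_colon i t c : Ia I d (mpure i t) c <-> pure_colon I d i t c.
  exact: Ia_pure_colon.
split=> [i | q q_min c].
  have [q q_stable] := chain_stationary (@pure_colon_succ _ _ _ pure_gens_I i)
    (mem_pure_colon pure_gens_I i) (not_mem_lt_max pure_gens_I I_ideal).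
  by exists q => t qt c; rewrite !Ia_colon; apply: q_stable.
split=> [/(ratliff_rush_pure_colon pure_gens_I) [k ck] i | cq].
  apply/(proj1 (q_min i) (maxn k (q i)) (leq_maxr _ _) c); apply/Ia_colon.
  exact: pure_colon_mono (leq_maxl _ _) (ck i).
apply: (pure_colon_ratliff_rush pure_gens_I good_I (t := \max_i q i)) => i.
exact: pure_colon_mono (leq_bigmax i) ((Ia_colon _ _ _).1 (cq i)).
Qed.
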